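(* Let $\mathbf{k}$ be a field, $Q$ a finite connected quiver, $\Lambda=\mathbf{k}Q/\mathcal{J}^2$ ($\mathcal{J}$ the arrow ideal), $n\ge2$, and assume $\mathcal{C}\subseteq\operatorname{mod}\Lambda$ is an $n$-cluster tilting subcategory. (a) If $w_1\to v\leftarrow w_2$ is a subquiver of $Q$ (two distinct arrows ending at $v$), then $\delta^+(w_1)=\delta^+(w_2)=1$. (b) If $u_1\leftarrow v\to u_2$ is a subquiver of $Q$ (two distinct arrows starting at $v$), then $\delta^-(u_1)=\delta^-(u_2)=1$.
   Context: Modules are finite-dimensional right modules. $\mathcal{C}$ is $n$-cluster tilting if it is functorially finite and $\mathcal{C}=\{X\mid \operatorname{Ext}^i(X,\mathcal{C})=0\ \forall 0<i<n\}=\{X\mid\operatorname{Ext}^i(\mathcal{C},X)=0\ \forall 0<i<n\}$. $\delta^-(v)$, $\delta^+(v)$ are the numbers of arrows ending, resp. starting, at $v$. *)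

From HB Require Import structures.
From mathcomp Require Import all_boot all_order all_algebra.
Set Implicit Arguments. Unset Strict Implicit. Unset Printing Implicit Defensive.
Import GRing.Theory.
Local Open Scope ring_scope.

(* Lambda = kQ / J^2 is the k-algebra generated by idempotents e_v (v in V)
   and arrows x_a (a in A) subject to
     e_v e_w = delta_{vw} e_v,  sum_v e_v = 1,  e_{src a} x_a e_{tgt a} = x_a,
     x_a x_b = 0  (all paths of length 2 vanish).
   A finite-dimensional right Lambda-module of dimension N is an algebra map
   Lambda -> 'M_N acting on row vectors from the right (m . lambda = m *m R(lambda)). *)

Section QuiverModules.
Variables (F : fieldType) (V A : finType) (src tgt : A -> V).

Record rmod := RMod { mdim : nat; midem : V -> 'M[F]_mdim; marr : A -> 'M[F]_mdim }.

Definition is_mod (M : rmod) : Prop :=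
  [/\ (forall v w, midem M v *m midem M w = if v == w then midem M v else 0),
      \sum_(v : V) midem M v = 1%:M,
      (forall a, midem M (src a) *m marr M a *m midem M (tgt a) = marr M a)
    & (forall a b, marr M a *m marr M b = 0)].

Definition is_hom (M N : rmod) (H : 'M[F]_(mdim M, mdim N)) : Prop :=
  (forall v, midem M v *m H = H *m midem N v) /\
  (forall a, marr M a *m H = H *m marr N a).

Definition is_projective (P : rmod) : Prop :=
  is_mod P /\
  forall (M N : rmod) (g : 'M[F]_(mdim M, mdim N)) (h : 'M[F]_(mdim P, mdim N)),
    is_mod M -> is_mod N -> is_hom g -> row_full g -> is_hom h ->
    exists l : 'M[F]_(mdim P, mdim M), is_hom l /\ h = l *m g.

(* projective resolution  ... -> P_2 --d 1--> P_1 --d 0--> P_0 --eps--> X -> 0 *)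
Definition is_projres (X : rmod) (P : nat -> rmod)
  (d : forall j, 'M[F]_(mdim (P j.+1), mdim (P j)))
  (eps : 'M[F]_(mdim (P 0), mdim X)) : Prop :=
  (forall j, is_projective (P j)) /\ is_mod X /\
  (forall j, is_hom (d j)) /\ is_hom eps /\ row_full eps /\
  (d 0 == kermx eps)%MS /\ (forall j, (d j.+1 == kermx (d j))%MS).

(* Ext^i(X,Y) = 0, for i >= 1, computed as H^i(Hom(P_., Y)) for a projective
   resolution P_. of X (independent of the resolution). *)
Definition Ext_vanishes (i : nat) (X Y : rmod) : Prop :=
  match i with
  | 0 => False (* only used for i >= 1 *)
  | k.+1 =>
    forall P d eps, @is_projres X P d eps ->
      forall phi : 'M[F]_(mdim (P k.+1), mdim Y),
        is_hom phi -> d k.+1 *m phi = 0 ->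
        exists psi : 'M[F]_(mdim (P k), mdim Y), is_hom psi /\ phi = d k *m psi
  end.

Definition contravariantly_finite (C : rmod -> Prop) : Prop :=
  forall M, is_mod M -> exists (C0 : rmod) (f : 'M[F]_(mdim C0, mdim M)),
    [/\ C C0, is_hom f &
      forall (C1 : rmod) (g : 'M[F]_(mdim C1, mdim M)), C C1 -> is_hom g ->
        exists h : 'M[F]_(mdim C1, mdim C0), is_hom h /\ g = h *m f].

Definition covariantly_finite (C : rmod -> Prop) : Prop :=
  forall M, is_mod M -> exists (C0 : rmod) (f : 'M[F]_(mdim M, mdim C0)),
    [/\ C C0, is_hom f &
      forall (C1 : rmod) (g : 'M[F]_(mdim M, mdim C1)), C C1 -> is_hom g ->
        exists h : 'M[F]_(mdim C0, mdim C1), is_hom h /\ g = f *m h].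

Definition functorially_finite (C : rmod -> Prop) : Prop :=
  contravariantly_finite C /\ covariantly_finite C.

Definition n_cluster_tilting (n : nat) (C : rmod -> Prop) : Prop :=
  [/\ forall X, C X -> is_mod X,
      functorially_finite C,
      (forall X, C X <-> (is_mod X /\ forall i, (0 < i < n)%N ->
                             forall Y, C Y -> Ext_vanishes i X Y))
    & (forall X, C X <-> (is_mod X /\ forall i, (0 < i < n)%N ->
                             forall Y, C Y -> Ext_vanishes i Y X))].

End QuiverModules.

Definition quiver_connected (V A : finType) (src tgt : A -> V) : Prop :=
  forall v w : V, connect
    (fun x y => [exists a : A, ((src a == x) && (tgt a == y)) ||
                               ((src a == y) && (tgt a == x))]) v w.

Definition outdeg (V A : finType) (src : A -> V) (v : V) : nat :=
  #|[set a : A | src a == v]|.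
Definition indeg (V A : finType) (tgt : A -> V) (v : V) : nat :=
  #|[set a : A | tgt a == v]|.

(* Lambda is projective and D(Lambda) is injective, so both lie in every
   n-cluster tilting subcategory, and n >= 2 forces Ext^1(D(Lambda), Lambda) = 0.
   Parts (a) and (b) both follow from one local obstruction to this: arrows
   a <> a' with a common target v and an arrow b <> a with the same source w as a.
   Map the free module P_0 with generators g_p onto D(Lambda) by g_p |-> p^*, p
   running over the basis of Lambda.  Sending g_{x_a^*} x_b to x_b and the other
   basis vectors of P_0 to 0 is Lambda-linear on the syzygy, so it is a 1-cocycle.
   Were it the restriction of a homomorphism psi : P_0 -> Lambda, then, since
   x_a^* x_b = 0, psi (g_{x_a^*} e_w) would have coefficient 1 at e_w; but then
   psi would send the syzygy element g_{x_a^*} x_a - g_{x_a'^*} x_a', whose terms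
   both map to e_v^*, to an element with coefficient 1 at x_a, where the cocycle
   gives 0. *)

From mathcomp Require Import all_boot all_order all_algebra.
Set Implicit Arguments. Unset Strict Implicit. Unset Printing Implicit Defensive.
Import GRing.Theory.
Local Open Scope ring_scope.

Section FinTypeMatrices.
Variable R : pzRingType.

Lemma sum_delta (T : finType) (q0 : T) (g : T -> R) :
  \sum_q (q0 == q)%:R * g q = g q0.
Proof.
rewrite (bigD1 q0) //= eqxx mul1r big1 ?addr0 // => q /negbTE.
by rewrite eq_sym => ->; rewrite mul0r.
Qed.

Lemma sum_deltaZ (T : finType) m n (q0 : T) (g : T -> 'M[R]_(m, n)) :
  \sum_q (q0 == q)%:R *: g q = g q0.
Proof.
rewrite (bigD1 q0) //= eqxx scale1r big1 ?addr0 // => q /negbTE.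
by rewrite eq_sym => ->; rewrite scale0r.
Qed.

Lemma sum_oapp (T : finType) (o : option T) (g : T -> R) :
  \sum_t (o == Some t)%:R * g t = oapp g 0 o.
Proof.
case: o => [t0|] /=; first by rewrite -(sum_delta t0 g).
by rewrite big1 // => t _; rewrite mul0r.
Qed.

Lemma sum_oappZ (T : finType) m n (o : option T) (g : T -> 'M[R]_(m, n)) :
  \sum_t (o == Some t)%:R *: g t = oapp g 0 o.
Proof.
case: o => [t0|] /=; first by rewrite -(sum_deltaZ t0 g).
by rewrite big1 // => t _; rewrite scale0r.
Qed.

Lemma oapp_nat_eq (T U : eqType) (o : option T) (h : T -> option U) u :
  oapp (fun t => (h t == Some u)%:R) (0 : R) o = (obind h o == Some u)%:R.
Proof. by case: o. Qed.

Lemma sum_enum_rank (T : finType) (M : nmodType) (g : 'I_#|T| -> M) :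
  \sum_i g i = \sum_p g (enum_rank p).
Proof. by rewrite (reindex enum_rank) //; apply: onW_bij; apply: enum_rank_bij. Qed.

Lemma sum_pair (M : nmodType) (T : finType) r (g : 'I_r * T -> M) :
  \sum_q g q = \sum_k \sum_t g (k, t).
Proof. by rewrite pair_bigA; apply: eq_bigr => -[]. Qed.

Definition erow (T : finType) (p : T) : 'rV[R]_#|T| := delta_mx 0 (enum_rank p).
Definition ecol (T : finType) (p : T) : 'cV[R]_#|T| := delta_mx (enum_rank p) 0.
Arguments erow {T} p.
Arguments ecol {T} p.

Definition fmx (T U : finType) (f : T -> U -> R) : 'M[R]_(#|T|, #|U|) :=
  \matrix_(i, j) f (enum_val i) (enum_val j).

Lemma erow_ecol (T : finType) (p q : T) : erow p *m ecol q = ((p == q)%:R)%:M.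
Proof.
apply/matrixP => i j; rewrite !ord1 !mxE.
rewrite (bigD1 (enum_rank p)) //= big1 => [|k /negbTE kp].
  by rewrite !mxE !eqxx /= mul1r addr0 (inj_eq enum_rank_inj) mulr1n andbT.
by rewrite /erow !mxE kp /= mul0r.
Qed.

Lemma erow_matrixP (T : finType) n (X Y : 'M[R]_(#|T|, n)) :
  (forall p : T, erow p *m X = erow p *m Y) -> X = Y.
Proof.
move=> H; apply/row_matrixP => i; rewrite !rowE.
by have := H (enum_val i); rewrite /erow enum_valK.
Qed.

Lemma ecol_matrixP (T : finType) m (X Y : 'M[R]_(m, #|T|)) :
  (forall p : T, X *m ecol p = Y *m ecol p) -> X = Y.
Proof.
move=> H; apply/matrixP => i j.
have := congr1 (fun M : 'cV[R]_m => M i 0) (H (enum_val j)).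
by rewrite /ecol -!colE !mxE enum_valK.
Qed.

Lemma fmx0 (T U : finType) : fmx (fun (_ : T) (_ : U) => 0) = 0.
Proof. by apply/matrixP => i j; rewrite !mxE. Qed.

Lemma fmx1 (T : finType) : fmx (fun p q : T => (p == q)%:R) = 1%:M.
Proof. by apply/matrixP => i j; rewrite !mxE (inj_eq enum_val_inj). Qed.

Lemma eq_fmx (T U : finType) (f g : T -> U -> R) :
  (forall p q, f p q = g p q) -> fmx f = fmx g.
Proof. by move=> H; apply/matrixP => i j; rewrite !mxE H. Qed.

Lemma fmx_mul (T U W : finType) (f : T -> U -> R) (g : U -> W -> R) :
  fmx f *m fmx g = fmx (fun p r => \sum_q f p q * g q r).
Proof.
apply/matrixP => i j; rewrite !mxE (sum_enum_rank (fun k => _)).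
by apply: eq_bigr => q _; rewrite !mxE enum_rankK.
Qed.

Lemma fmx_sum (I T U : finType) (f : I -> T -> U -> R) :
  \sum_k fmx (f k) = fmx (fun p q => \sum_k f k p q).
Proof.
by apply/matrixP => i j; rewrite !mxE summxE; apply: eq_bigr => k _; rewrite mxE.
Qed.

Lemma erow_fmx (T U : finType) (f : T -> U -> R) p :
  erow p *m fmx f = \sum_q f p q *: erow q.
Proof.
apply/rowP => j; rewrite /erow -rowE mxE summxE -(enum_valK j) mxE !enum_rankK.
rewrite (eq_bigr (fun q => (enum_val j == q)%:R * f p q)) ?sum_delta // => q _.
by rewrite !mxE eqxx /= (inj_eq enum_rank_inj) mulr_natl mulr_natr eq_sym.
Qed.

Lemma fmx_ecol (T U : finType) (f : T -> U -> R) q :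
  fmx f *m ecol q = \sum_p f p q *: ecol p.
Proof.
apply/colP => j; rewrite /ecol -colE mxE summxE -(enum_valK j) mxE !enum_rankK.
rewrite (eq_bigr (fun p => (enum_val j == p)%:R * f p q)) ?sum_delta // => p _.
by rewrite !mxE eqxx /= (inj_eq enum_rank_inj) andbT mulr_natl mulr_natr eq_sym.
Qed.

End FinTypeMatrices.
Arguments oapp_nat_eq {R T U} o h u.
Arguments erow {R T} p.
Arguments ecol {R T} p.

Lemma factor_through_kermx (F : fieldType) m n p (d : 'M[F]_(m, n)) (f : 'M[F]_(m, p)) :
  (kermx d <= kermx f)%MS -> exists g : 'M[F]_(n, p), f = d *m g.
Proof.
move=> dkf.
have coker_ker : ((cokermx d^T)^T <= kermx d)%MS.
  by apply/sub_kermxP; rewrite -[d in _ *m d]trmxK -trmx_mul mulmx_coker trmx0.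
have /sub_kermxP fcoker := submx_trans coker_ker dkf.
have /submxP [g Eg] : (f^T <= d^T)%MS.
  by rewrite submxE -[_ *m _]trmxK trmx_mul trmxK fcoker trmx0.
by exists g^T; rewrite -[f]trmxK Eg trmx_mul trmxK.
Qed.

Section QuiverAlgebra.
Variables (F : fieldType) (V A : finType) (src tgt : A -> V).

(* The basis of kQ/J^2: [inl v] is the trivial path e_v, [inr a] the arrow x_a;
   the product of two basis elements is again one, or zero ([None]). *)
Local Notation B := (V + A)%type.

Definition pmul (x y : B) : option B :=
  match x, y with
  | inl v, inl w => if v == w then Some (inl v) else None
  | inl v, inr a => if v == src a then Some (inr a) else None
  | inr a, inl w => if w == tgt a then Some (inr a) else None
  | inr _, inr _ => None
  end.

Lemma pmulA x y z :
  obind (pmul^~ z) (pmul x y) = obind (pmul x) (pmul y z).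
Proof.
case: x => [v|a]; case: y => [w|b]; case: z => [u|c] /=;
  repeat (case: eqP => [?|?]; subst => /=); rewrite ?eqxx //=;
  repeat (case: eqP => //=).
Qed.

Definition psrc (t : B) : V := match t with inl v => v | inr a => src a end.
Definition ptgt (t : B) : V := match t with inl v => v | inr a => tgt a end.

Lemma pmul_vtx_r t v w : (pmul t (inl v) == Some w) = (w == t) && (ptgt t == v).
Proof.
case: t => [u|a] /=; first by case: (eqVneq u v) => [->|_]; rewrite ?andbT ?andbF // eq_sym.
by case: (eqVneq v (tgt a)); rewrite ?andbT ?andbF // eq_sym.
Qed.

Lemma pmul_vtx_l v t w : (pmul (inl v) t == Some w) = (w == t) && (psrc t == v).
Proof.
case: t => [u|a] /=; first by case: (eqVneq v u) => [->|_]; rewrite ?andbT ?andbF // eq_sym.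
by case: (eqVneq v (src a)); rewrite ?andbT ?andbF // eq_sym.
Qed.

Lemma pmul_arr_r t a w : (pmul t (inr a) == Some w) = (t == inl (src a)) && (w == inr a).
Proof.
case: t => [v|b] //=; rewrite (inj_eq (@inl_inj _ _)).
by case: (eqVneq v (src a)) => //= _; rewrite eq_sym.
Qed.

Lemma pmul_arr_l a t w : (pmul (inr a) t == Some w) = (t == inl (tgt a)) && (w == inr a).
Proof.
case: t => [v|b] //=; rewrite (inj_eq (@inl_inj _ _)).
by case: (eqVneq v (tgt a)) => //= _; rewrite eq_sym.
Qed.

Definition act (M : rmod F V A) (s : B) : 'M[F]_(mdim M) :=
  match s with inl v => midem M v | inr a => marr M a end.

Lemma act_mul (M : rmod F V A) : is_mod src tgt M ->
  forall s t, act M s *m act M t = oapp (act M) 0 (pmul s t).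
Proof.
case=> He _ Ha Hz [v|a] [w|b] /=.
- by rewrite He; case: (v == w).
- rewrite -{1}(Ha b) !mulmxA He.
  by case: eqP => [->|_] /=; rewrite ?mul0mx // Ha.
- rewrite -{1}(Ha a) -!mulmxA He [tgt a == w]eq_sym.
  by case: eqP => _ /=; rewrite ?mulmx0 // !mulmxA Ha.
- by rewrite Hz.
Qed.

Lemma is_mod_of_act_mul (M : rmod F V A) :
  (forall s t, act M s *m act M t = oapp (act M) 0 (pmul s t)) ->
  \sum_v midem M v = 1%:M -> is_mod src tgt M.
Proof.
move=> H Hs; split => //.
- by move=> v w; rewrite (H (inl v) (inl w)) /=; case: (v == w).
- move=> a; have := H (inl (src a)) (inr a); have := H (inr a) (inl (tgt a)).
  by rewrite /= !eqxx /= => h2 h1; rewrite h1 h2.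
- by move=> a b; rewrite (H (inr a) (inr b)).
Qed.

Lemma is_hom_act (M N : rmod F V A) (H : 'M[F]_(mdim M, mdim N)) :
  is_hom H <-> forall s, act M s *m H = H *m act N s.
Proof.
split; first by case=> h1 h2 [v|a] /=.
by move=> h; split => [v|a]; [apply: (h (inl v)) | apply: (h (inr a))].
Qed.

Lemma is_homM (M N P : rmod F V A) (H1 : 'M[F]_(mdim M, mdim N))
    (H2 : 'M[F]_(mdim N, mdim P)) :
  is_hom H1 -> is_hom H2 -> is_hom (H1 *m H2).
Proof.
move=> /is_hom_act h1 /is_hom_act h2; apply/is_hom_act => s.
by rewrite mulmxA h1 -mulmxA h2 mulmxA.
Qed.

Lemma is_homB (M N : rmod F V A) (H1 H2 : 'M[F]_(mdim M, mdim N)) :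
  is_hom H1 -> is_hom H2 -> is_hom (H1 - H2).
Proof.
move=> /is_hom_act h1 /is_hom_act h2; apply/is_hom_act => s.
by rewrite mulmxBr mulmxBl h1 h2.
Qed.

Lemma is_hom1 (M : rmod F V A) : is_hom (1%:M : 'M[F]_(mdim M)).
Proof. by apply/is_hom_act => s; rewrite mulmx1 mul1mx. Qed.

Lemma kermx_act_stable (M N : rmod F V A) (h : 'M[F]_(mdim M, mdim N)) :
  is_hom h -> forall s, (kermx h *m act M s <= kermx h)%MS.
Proof.
move=> /is_hom_act Hh s; apply/sub_kermxP.
by rewrite -mulmxA Hh mulmxA (sub_kermxP (submx_refl _)) mul0mx.
Qed.

(* A module on the basis [T] with structure constants [f s p q], the
   [q]-coordinate of [p . s]. *)
Definition struct_mod (T : finType) (f : B -> T -> T -> F) : rmod F V A :=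
  @RMod F V A #|T| (fun v => fmx (f (inl v))) (fun a => fmx (f (inr a))).

Lemma act_struct_mod (T : finType) (f : B -> T -> T -> F) s :
  act (struct_mod f) s = fmx (f s).
Proof. by case: s. Qed.

Lemma is_mod_struct_mod (T : finType) (f : B -> T -> T -> F) :
  (forall s t p q, \sum_u f s p u * f t u q = oapp (fun w => f w p q) 0 (pmul s t)) ->
  (forall p q, \sum_v f (inl v) p q = (p == q)%:R) -> is_mod src tgt (struct_mod f).
Proof.
move=> Ht Hu; apply: is_mod_of_act_mul => [s t|].
  rewrite !act_struct_mod fmx_mul (eq_fmx (Ht s t)).
  by case: (pmul s t) => [w|] /=; [rewrite act_struct_mod | rewrite fmx0].
by rewrite /= (fmx_sum (fun v => f (inl v))) (eq_fmx Hu) fmx1.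
Qed.

(* The free module Lambda^r, with basis ['I_r * B]: [(i, t)] is the [i]-th
   generator times [t]. *)
Definition free_coef r (s : B) (p q : 'I_r * B) : F :=
  ((p.1 == q.1) && (pmul p.2 s == Some q.2))%:R.

Arguments free_coef : clear implicits.

Definition free r := struct_mod (free_coef r).

Lemma is_mod_free r : is_mod src tgt (free r).
Proof.
apply: is_mod_struct_mod => [s t p q|p q].
  rewrite sum_pair.
  rewrite (eq_bigr (fun k => (p.1 == k)%:R *
     \sum_m (pmul p.2 s == Some m)%:R * free_coef r t (k, m) q)); last first.
    move=> k _; rewrite mulr_sumr; apply: eq_bigr => m _.
    by rewrite /free_coef /= -mulnb natrM mulrA.
  rewrite sum_delta sum_oapp /free_coef /=.
  case: (p.1 == q.1) => /=; last by case: (pmul p.2 s); case: (pmul s t).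
  by rewrite !oapp_nat_eq pmulA.
rewrite (eq_bigr (fun v => (ptgt p.2 == v)%:R * ((p.1 == q.1) && (q.2 == p.2))%:R)).
  by rewrite sum_delta; case: p q => [p1 p2] [q1 q2] /=; rewrite xpair_eqE [p2 == q2]eq_sym.
move=> v _; rewrite /free_coef pmul_vtx_r.
by case: (p.1 == q.1); case: (q.2 == p.2); case: (ptgt p.2 == v); rewrite ?mulr1 ?mulr0.
Qed.

Lemma erow_free_act r (p : 'I_r * B) s :
  erow p *m act (free r) s = oapp (fun w => erow (p.1, w)) 0 (pmul p.2 s).
Proof.
rewrite act_struct_mod erow_fmx sum_pair.
rewrite (eq_bigr (fun i => (p.1 == i)%:R *:
     \sum_m (pmul p.2 s == Some m)%:R *: erow (i, m))); last first.
  move=> k _; rewrite scaler_sumr; apply: eq_bigr => m _.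
  by rewrite /free_coef /= -mulnb natrM scalerA.
by rewrite sum_deltaZ sum_oappZ.
Qed.

Lemma free_act_ecol r s (k : 'I_r * B) :
  act (free r) s *m ecol k = \sum_t (pmul t s == Some k.2)%:R *: ecol (k.1, t).
Proof.
rewrite act_struct_mod fmx_ecol sum_pair.
rewrite (eq_bigr (fun i => (k.1 == i)%:R *:
     \sum_t (pmul t s == Some k.2)%:R *: ecol (i, t))); last first.
  move=> i _; rewrite scaler_sumr; apply: eq_bigr => t _.
  by rewrite /free_coef /= -mulnb natrM scalerA eq_sym.
by rewrite sum_deltaZ.
Qed.

Lemma free_vtx_ecol r v (k : 'I_r * B) :
  act (free r) (inl v) *m ecol k = (ptgt k.2 == v)%:R *: ecol k.
Proof.
rewrite free_act_ecol.
rewrite (eq_bigr (fun t => (k.2 == t)%:R *: ((ptgt k.2 == v)%:R *: ecol (k.1, t)))).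
  by rewrite sum_deltaZ; case: k.
by move=> t _; rewrite pmul_vtx_r scalerA -natrM mulnb; case: eqP => // ->.
Qed.

Lemma free_arr_ecol r c (k : 'I_r * B) :
  act (free r) (inr c) *m ecol k = (k.2 == inr c)%:R *: ecol (k.1, inl (src c)).
Proof.
rewrite free_act_ecol (eq_bigr (fun t =>
  (inl (src c) == t)%:R *: ((k.2 == inr c)%:R *: ecol (k.1, t)))) ?sum_deltaZ //.
by move=> t _; rewrite pmul_arr_r scalerA -natrM mulnb eq_sym.
Qed.

Definition free_gen r (i : 'I_r) : 'rV[F]_(mdim (free r)) := \sum_v erow (i, inl v).

Lemma free_gen_act r (i : 'I_r) t : free_gen i *m act (free r) t = erow (i, t).
Proof.
rewrite mulmx_suml (eq_bigr (fun v => if v == psrc t then erow (i, t) else 0)).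
  by rewrite -big_mkcond big_pred1_eq.
move=> v _; rewrite erow_free_act.
by case: t => [u|a] /=; case: eqVneq => // e; rewrite /= ?e.
Qed.

Definition free_hom (M : rmod F V A) r (G : 'M[F]_(r, mdim M)) :
    'M[F]_(mdim (free r), mdim M) :=
  \matrix_(k < #|{: 'I_r * B}|) (row (enum_val k).1 G *m act M (enum_val k).2).

Lemma erow_free_hom (M : rmod F V A) r (G : 'M[F]_(r, mdim M)) p :
  erow p *m free_hom G = row p.1 G *m act M p.2.
Proof. by rewrite /erow -rowE rowK enum_rankK. Qed.

Section FreeHom.
Variables (M : rmod F V A) (r : nat) (G : 'M[F]_(r, mdim M)).
Hypothesis modM : is_mod src tgt M.

Lemma is_hom_free_hom : is_hom (free_hom G).
Proof.
apply/is_hom_act => s; apply: erow_matrixP => p.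
rewrite !mulmxA erow_free_act erow_free_hom -mulmxA (act_mul modM).
by case: (pmul p.2 s) => [w|] /=; rewrite ?mul0mx ?mulmx0 // erow_free_hom.
Qed.

Lemma free_gen_hom i : free_gen i *m free_hom G = row i G.
Proof.
case: modM => _ Hs _ _.
by rewrite mulmx_suml; under eq_bigr do rewrite erow_free_hom /=;
  rewrite -mulmx_sumr Hs mulmx1.
Qed.

Lemma free_hom_eqmx : (forall s, (G *m act M s <= G)%MS) -> (free_hom G == G)%MS.
Proof.
move=> H; apply/andP; split.
  apply/row_subP => k; rewrite rowK.
  exact: submx_trans (submxMr _ (row_sub _ _)) (H _).
by apply/row_subP => i; rewrite -free_gen_hom submxMl.
Qed.

End FreeHom.

Lemma is_projective_free r : is_projective src tgt (free r).
Proof.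
split; first exact: is_mod_free.
move=> M N g h modM _ /is_hom_act Hg gfull /is_hom_act Hh.
pose G := \matrix_i (free_gen i *m h *m pinvmx g).
exists (free_hom G); split; first exact: is_hom_free_hom.
apply: erow_matrixP => -[i t].
rewrite [RHS]mulmxA erow_free_hom rowK /= -(mulmxA _ (act M t)) Hg mulmxA.
rewrite mulmxKpV ?submx_full //.
by rewrite -mulmxA -Hh mulmxA free_gen_act.
Qed.

Section Submodule.
Variables (M : rmod F V A) (m : nat) (D : 'M[F]_(m, mdim M)).
Local Notation R := (row_base D).

(* The submodule spanned by the rows of [D], in the coordinates of [row_base D]. *)
Definition submod : rmod F V A :=
  @RMod F V A (\rank D) (fun v => R *m midem M v *m pinvmx R)
    (fun a => R *m marr M a *m pinvmx R).

Lemma act_submod s : act submod s = R *m act M s *m pinvmx R.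
Proof. by case: s. Qed.

Hypothesis modM : is_mod src tgt M.
Hypothesis stableD : forall s, (D *m act M s <= D)%MS.

Lemma is_mod_submod : is_mod src tgt submod.
Proof.
have stableR s : (R *m act M s <= R)%MS.
  by rewrite (eqmxMr _ (eq_row_base D)) (eq_row_base D).
apply: is_mod_of_act_mul => [s t|].
  rewrite !act_submod (mulmxA _ (R *m act M t)) (mulmxA _ R).
  rewrite (mulmxKpV (stableR s)) -(mulmxA R (act M s)) (act_mul modM).
  by case: (pmul s t) => [w|] /=; rewrite ?act_submod ?mulmx0 ?mul0mx.
case: modM => _ Hs _ _.
by rewrite /= -mulmx_suml -mulmx_sumr Hs mulmx1 mulmxVp // row_base_free.
Qed.

Lemma is_hom_corestr (Q : rmod F V A) (X : 'M[F]_(mdim Q, mdim M)) :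
  is_hom X -> (X <= D)%MS -> @is_hom F V A Q submod (X *m pinvmx R).
Proof.
move=> /is_hom_act hX XD; apply/is_hom_act => s.
have XR : (X <= R)%MS by rewrite eq_row_base.
by rewrite act_submod (mulmxA _ (R *m act M s)) (mulmxA _ R) (mulmxKpV XR) mulmxA hX.
Qed.

End Submodule.

(* [is_projective] only lifts along surjections: corestrict [d] to its image. *)
Lemma projective_lift (P M N : rmod F V A) (d : 'M[F]_(mdim M, mdim N))
    (h : 'M[F]_(mdim P, mdim N)) :
  is_projective src tgt P -> is_mod src tgt M -> is_mod src tgt N ->
  is_hom d -> is_hom h -> (h <= d)%MS ->
  exists l : 'M[F]_(mdim P, mdim M), is_hom l /\ h = l *m d.
Proof.
move=> [_ liftP] modM modN Hd Hh hd.
have stable s : (d *m act N s <= d)%MS.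
  by move/is_hom_act: Hd => Hd; rewrite -Hd submxMl.
have dR : (d <= row_base d)%MS by rewrite eq_row_base.
have hR : (h <= row_base d)%MS by rewrite eq_row_base.
have full : row_full (d *m pinvmx (row_base d)).
  rewrite -sub1mx -(mulmxVp (row_base_free d)).
  have /submxP [z ->] : (row_base d <= d)%MS by rewrite eq_row_base.
  by rewrite -mulmxA submxMl.
have [l [Hl E]] := liftP _ _ _ _ modM (is_mod_submod modN stable)
  (is_hom_corestr Hd (submx_refl d)) full (is_hom_corestr Hh hd).
by exists l; split => //; rewrite -(mulmxKpV hR) E -mulmxA (mulmxKpV dR).
Qed.

(* [1 - b t] maps into [ker b = im a]; lift it through [a]. *)
Lemma projective_split_step (P P1 P0 : rmod F V A) (a : 'M[F]_(mdim P1, mdim P))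
    (b : 'M[F]_(mdim P, mdim P0)) (t : 'M[F]_(mdim P0, mdim P)) :
  is_projective src tgt P -> is_mod src tgt P1 -> is_hom a -> is_hom b -> is_hom t ->
  (a == kermx b)%MS -> b *m t *m b = b ->
  exists s : 'M[F]_(mdim P, mdim P1),
    [/\ is_hom s, s *m a = 1%:M - b *m t & a *m s *m a = a].
Proof.
move=> projP modP1 Ha Hb Ht /andP[ak ka] btb.
have Hh : is_hom (1%:M - b *m t) by apply: is_homB; [exact: is_hom1 | exact: is_homM].
have hk : (1%:M - b *m t <= a)%MS.
  by apply: submx_trans ka; apply/sub_kermxP; rewrite mulmxBl mul1mx btb subrr.
have [s [Hs E]] := projective_lift projP modP1 projP.1 Ha Hh hk.
have ab : a *m b = 0 by apply/sub_kermxP.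
exists s; split => //.
by rewrite -mulmxA -E mulmxBr mulmx1 mulmxA ab mul0mx subr0.
Qed.

Lemma projres_projective_regular (X : rmod F V A) (P : nat -> rmod F V A)
    (d : forall j, 'M[F]_(mdim (P j.+1), mdim (P j))) (eps : 'M[F]_(mdim (P 0), mdim X)) :
  is_projective src tgt X -> is_projres src tgt d eps ->
  forall j, exists s : 'M[F]_(mdim (P j), mdim (P j.+1)), is_hom s /\ d j *m s *m d j = d j.
Proof.
move=> projX [projP [modX [Hd [He [eps_full [d0 dS]]]]]].
have modP j : is_mod src tgt (P j) by case: (projP j).
have [t0 [Ht0 E0]] : exists t0 : 'M[F]_(mdim X, mdim (P 0)), is_hom t0 /\ 1%:M = t0 *m eps.
  by apply: (projective_lift projX (modP 0%N) modX He (is_hom1 X)); rewrite sub1mx.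
elim=> [|j [s [Hs dsd]]].
  have ete : eps *m t0 *m eps = eps by rewrite -mulmxA -E0 mulmx1.
  have [s [Hs _ dsd]] := projective_split_step (projP 0%N) (modP 1%N) (Hd 0%N) He Ht0 d0 ete.
  by exists s.
have [s' [Hs' _ dsd']] :=
  projective_split_step (projP j.+1) (modP j.+2) (Hd j.+1) (Hd j) Hs (dS j) dsd.
by exists s'.
Qed.

Lemma Ext_vanishes_projective (X Y : rmod F V A) i :
  is_projective src tgt X -> (0 < i)%N -> Ext_vanishes src tgt i X Y.
Proof.
move=> projX; case: i => // k _ P d eps res phi Hphi phi_cocycle.
have [projP [_ [Hd [_ [_ [_ dS]]]]]] := res.
have [s [Hs dsd]] := projres_projective_regular projX res k.
have [s' [_ E _]] := projective_split_step (projP k.+1) (projP k.+2).1 (Hd k.+1) (Hd k) Hs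
  (dS k) dsd.
exists (s *m phi); split; first exact: is_homM.
have -> : d k *m (s *m phi) = (1%:M - s' *m d k.+1) *m phi.
  by rewrite E mulmxA opprB addrC subrK.
by rewrite mulmxBl mul1mx -mulmxA phi_cocycle mulmx0 subr0.
Qed.

(* D(Lambda) on the dual basis: [p^* . s] is the sum of the [q^*] with [s q = p]. *)
Definition dual_coef (s : B) (p q : B) : F := (pmul s q == Some p)%:R.

Definition dual := struct_mod dual_coef.

Lemma is_mod_dual : is_mod src tgt dual.
Proof.
apply: is_mod_struct_mod => [s t p q|p q].
  under eq_bigr do rewrite mulrC.
  by rewrite sum_oapp /dual_coef (oapp_nat_eq _ (pmul s)) oapp_nat_eq pmulA.
rewrite (eq_bigr (fun v => (psrc q == v)%:R * (p == q)%:R)) ?sum_delta // => v _.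
rewrite /dual_coef pmul_vtx_l.
by case: (p == q); case: (psrc q == v); rewrite ?mulr1 ?mulr0.
Qed.

(* Evaluation at [1 = sum_v e_v], as a linear form on D(Lambda). *)
Definition unit_col : 'cV[F]_#|{: B}| := \sum_v ecol (inl v : B).

Lemma dual_act_unit_col q : act dual q *m unit_col = ecol q.
Proof.
rewrite act_struct_mod /unit_col mulmx_sumr; under eq_bigr do rewrite fmx_ecol.
rewrite exchange_big /= (eq_bigr (fun p => (q == p)%:R *: ecol p)) ?sum_deltaZ //.
move=> p _; rewrite -scaler_suml; congr (_ *: _).
rewrite (eq_bigr (fun v => (ptgt q == v)%:R * (q == p)%:R)) ?sum_delta //.
move=> v _; rewrite /dual_coef pmul_vtx_r [p == q]eq_sym.
by case: (q == p); case: (ptgt q == v); rewrite ?mulr1 ?mulr0.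
Qed.

(* A homomorphism into D(Lambda) is recovered from its composite with evaluation
   at 1, and that linear form factors through [d]. *)
Lemma dual_extend (M N : rmod F V A) (d : 'M[F]_(mdim M, mdim N))
    (phi : 'M[F]_(mdim M, mdim dual)) :
  is_mod src tgt N -> is_hom d -> is_hom phi -> (kermx d <= kermx phi)%MS ->
  exists psi : 'M[F]_(mdim N, mdim dual), is_hom psi /\ phi = d *m psi.
Proof.
move=> modN /is_hom_act Hd /is_hom_act Hphi dkphi.
have [g Eg] : exists g : 'cV[F]_(mdim N), phi *m unit_col = d *m g.
  apply: factor_through_kermx; apply: submx_trans dkphi _.
  by apply/sub_kermxP; rewrite mulmxA mulmx_ker mul0mx.
pose psi : 'M[F]_(mdim N, #|{: B}|) := \matrix_(i, k) (act N (enum_val k) *m g) i 0.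
have psiE q : psi *m ecol q = act N q *m g.
  by rewrite /ecol -colE; apply/colP => i; rewrite !mxE enum_rankK.
exists psi; split.
  apply/is_hom_act => s; apply: ecol_matrixP => q.
  rewrite -mulmxA psiE mulmxA (act_mul modN) act_struct_mod -mulmxA fmx_ecol mulmx_sumr.
  under eq_bigr do rewrite -scalemxAr psiE.
  by rewrite /dual_coef sum_oappZ; case: (pmul s q) => [w|] /=; rewrite ?mul0mx.
apply: ecol_matrixP => q.
rewrite -mulmxA psiE mulmxA -Hd -mulmxA -Eg mulmxA Hphi -mulmxA.
by rewrite dual_act_unit_col.
Qed.

Lemma Ext_vanishes_dual (Y : rmod F V A) i : (0 < i)%N -> Ext_vanishes src tgt i Y dual.
Proof.
case: i => // k _ P d eps [projP [_ [Hd [_ [_ [_ dS]]]]]] phi Hphi phi_cocycle.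
apply: dual_extend (Hd k) Hphi _; first by case: (projP k).
case/andP: (dS k) => _ kd; apply: submx_trans kd _.
exact/sub_kermxP.
Qed.

(* The restriction [d 0 *m Pi] to the syzygy is a 1-cocycle, hence a coboundary. *)
Lemma Ext1_vanishes_extend (X Y : rmod F V A) (P : nat -> rmod F V A)
    (d : forall j, 'M[F]_(mdim (P j.+1), mdim (P j))) (eps : 'M[F]_(mdim (P 0), mdim X))
    (Pi : 'M[F]_(mdim (P 0), mdim Y)) :
  is_projres src tgt d eps -> Ext_vanishes src tgt 1 X Y ->
  (forall u : 'rV_(mdim (P 0)), u *m eps = 0 ->
     forall s, u *m act (P 0) s *m Pi = u *m Pi *m act Y s) ->
  exists psi : 'M[F]_(mdim (P 0), mdim Y),
    is_hom psi /\ forall w : 'rV_(mdim (P 0)), w *m eps = 0 -> w *m Pi = w *m psi.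
Proof.
move=> res ext1 PiE; have [_ [_ [Hd [_ [_ [/andP[d0_ker ker_d0] dS]]]]]] := res.
have Hphi : is_hom (d 0%N *m Pi).
  apply/is_hom_act => s; move/is_hom_act: (Hd 0%N) => Hd0.
  rewrite mulmxA Hd0; apply/row_matrixP => i; rewrite !row_mul.
  by apply: PiE; apply/sub_kermxP; apply: submx_trans (row_sub i _) d0_ker.
have cocycle : d 1%N *m (d 0%N *m Pi) = 0.
  by case/andP: (dS 0%N) => /sub_kermxP d1d0 _; rewrite mulmxA d1d0 mul0mx.
have [psi [Hpsi Ephi]] := ext1 P d eps res _ Hphi cocycle.
exists psi; split => // w /sub_kermxP w_ker.
have /submxP [z ->] := submx_trans w_ker ker_d0.
by rewrite -!mulmxA Ephi.
Qed.

Section FreeResolution.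
Variable X : rmod F V A.
Hypothesis modX : is_mod src tgt X.

Definition res_eps : 'M[F]_(mdim (free (mdim X)), mdim X) := free_hom (1%:M : 'M_(mdim X)).

Fixpoint res_rank j : nat :=
  if j is j'.+1 then mdim (free (res_rank j')) else mdim X.

Definition res_mod j := free (res_rank j).

Fixpoint res_d j : 'M[F]_(mdim (res_mod j.+1), mdim (res_mod j)) :=
  match j with
  | 0 => free_hom (kermx res_eps)
  | j'.+1 => free_hom (kermx (res_d j'))
  end.

Lemma is_hom_res_d j : is_hom (res_d j).
Proof. by case: j => [|j] /=; apply: is_hom_free_hom; apply: is_mod_free. Qed.

Lemma is_projres_free : is_projres src tgt res_d res_eps.
Proof.
have Heps : is_hom res_eps by exact: is_hom_free_hom.
split; first by move=> j; exact: is_projective_free.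
split=> //; split; first exact: is_hom_res_d.
split=> //; split.
  by rewrite -sub1mx; case/andP: (free_hom_eqmx (G := 1%:M) modX (fun s => submx1 _)).
split; first by apply: free_hom_eqmx; [exact: is_mod_free | exact: kermx_act_stable].
move=> j; apply: free_hom_eqmx; first exact: is_mod_free.
exact/kermx_act_stable/is_hom_res_d.
Qed.

End FreeResolution.

Lemma erow_dual_arr (a c : A) :
  erow (inr a : B) *m act dual (inr c) = (a == c)%:R *: erow (inl (tgt c) : B).
Proof.
rewrite act_struct_mod erow_fmx.
rewrite (eq_bigr (fun q => (inl (tgt c) == q)%:R *: ((a == c)%:R *: erow q))) ?sum_deltaZ //.
move=> q _; rewrite /dual_coef pmul_arr_l scalerA -natrM mulnb (inj_eq (@inr_inj _ _)).
by rewrite eq_sym.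
Qed.

Section Ext1Obstruction.
Variables (a a' b : A).
Hypotheses (neq_aa' : a != a') (neq_ab : a != b).
Hypotheses (tgt_aa' : tgt a = tgt a') (src_ba : src b = src a).

Local Notation P0 := (res_mod dual 0).
Local Notation eps := (res_eps dual).
Local Notation gen c := (enum_rank (inr c : B) : 'I_(mdim dual)).

Lemma res_eps_erow (i : 'I_(mdim dual)) t :
  erow (i, t) *m eps = erow (enum_val i) *m act dual t.
Proof. by rewrite erow_free_hom row1 /erow enum_valK. Qed.

Lemma res_eps_arr_ecol : eps *m ecol (inr a : B) = ecol (gen a, inl (src a)).
Proof.
apply: erow_matrixP => -[i t].
rewrite (mulmxA (erow _)) res_eps_erow -mulmxA act_struct_mod fmx_ecol.
rewrite (eq_bigr (fun q => (inr a == q)%:R *: ((t == inl (src a))%:R *: ecol q))).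
  rewrite sum_deltaZ -scalemxAr !erow_ecol scale_scalar_mx -natrM mulnb.
  by rewrite xpair_eqE (can2_eq (@enum_valK _) (@enum_rankK _)) andbC.
move=> q _; rewrite /dual_coef pmul_arr_r scalerA -natrM mulnb eq_sym.
by rewrite [inr a == q]eq_sym andbC.
Qed.

Definition obstruction : 'M[F]_(mdim P0, mdim (free 1)) :=
  ecol (gen a, inr b) *m erow (ord0, inr b).

Lemma obstruction_linear_on_syzygy (u : 'rV_(mdim P0)) : u *m eps = 0 ->
  forall s, u *m act P0 s *m obstruction = u *m obstruction *m act (free 1) s.
Proof.
move=> u_ker s; rewrite /obstruction !mulmxA -(mulmxA u (act P0 s)) -(mulmxA (u *m ecol _)).
case: s => [v|c].
  rewrite free_vtx_ecol erow_free_act /= -scalemxAr -scalemxAl.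
  by case: eqVneq => _ /=; rewrite ?scale1r ?scale0r ?mulmx0.
rewrite free_arr_ecol erow_free_act /= mulmx0 (inj_eq (@inr_inj _ _)).
have [<-|] := eqVneq b c; last by rewrite scale0r mulmx0 mul0mx.
by rewrite /= scale1r src_ba -res_eps_arr_ecol mulmxA u_ker !mul0mx.
Qed.

Lemma obstruction_not_extendable (psi : 'M[F]_(mdim P0, mdim (free 1))) :
  is_hom psi ->
  ~ (forall w : 'rV_(mdim P0), w *m eps = 0 -> w *m obstruction = w *m psi).
Proof.
move=> /is_hom_act Hpsi agree.
have gen_arr (i : 'I_(mdim dual)) c :
    erow (i, inr c) = erow (i, inl (src c)) *m act P0 (inr c).
  by rewrite erow_free_act /= eqxx.
have psi_arr i c k : erow (i, inr c) *m psi *m ecol (ord0, inr k) =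
    (k == c)%:R *: (erow (i, inl (src c)) *m psi *m ecol (ord0, inl (src c))).
  rewrite gen_arr -(mulmxA _ (act P0 _) psi) Hpsi mulmxA -(mulmxA _ (act _ _)).
  by rewrite free_arr_ecol -scalemxAr /= (inj_eq (@inr_inj _ _)).
pose coef_a := erow (gen a, inl (src a)) *m psi *m ecol (ord0, inl (src a) : B).
have coef_a1 : coef_a = 1%:M.
  have ker_ab : erow (gen a, inr b) *m eps = 0.
    by rewrite res_eps_erow enum_rankK erow_dual_arr (negbTE neq_ab) scale0r.
  have := congr1 (mulmx^~ (ecol (ord0, inr b : B))) (agree _ ker_ab).
  rewrite /obstruction mulmxA erow_ecol eqxx mul1mx erow_ecol eqxx.
  by rewrite psi_arr eqxx scale1r src_ba /coef_a => <-.
have ker_aa' : (erow (gen a, inr a) - erow (gen a', inr a')) *m eps = 0.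
  by rewrite mulmxBl !res_eps_erow !enum_rankK !erow_dual_arr !eqxx tgt_aa' subrr.
have := congr1 (mulmx^~ (ecol (ord0, inr a : B))) (agree _ ker_aa').
rewrite /obstruction -mulmxA -(mulmxA (ecol _)) erow_ecol xpair_eqE /=.
rewrite (inj_eq (@inr_inj _ _)) eq_sym (negbTE neq_ab) mul_mx_scalar scale0r mulmx0.
rewrite mulmxBl mulmxBl !psi_arr eqxx (negbTE neq_aa') scale0r scale1r subr0.
by rewrite -/coef_a coef_a1 => /matrixP/(_ 0 0)/eqP; rewrite !mxE eq_sym oner_eq0.
Qed.

Lemma Ext1_dual_free_nonvanishing : ~ Ext_vanishes src tgt 1 dual (free 1).
Proof.
move=> ext1.
have [psi [Hpsi agree]] := Ext1_vanishes_extend (is_projres_free is_mod_dual) ext1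
  obstruction_linear_on_syzygy.
exact: obstruction_not_extendable Hpsi agree.
Qed.

End Ext1Obstruction.

Lemma n_cluster_tilting_Ext1_dual_free n (C : rmod F V A -> Prop) :
  (2 <= n)%N -> n_cluster_tilting src tgt n C -> Ext_vanishes src tgt 1 dual (free 1).
Proof.
move=> n_ge2 [_ _ C_left C_right].
have C_free : C (free 1).
  apply/C_left; split=> [|i /andP[i_gt0 _] Y _]; first exact: is_mod_free.
  exact: Ext_vanishes_projective (is_projective_free 1) i_gt0.
have C_dual : C dual.
  apply/C_right; split=> [|i /andP[i_gt0 _] Y _]; first exact: is_mod_dual.
  exact: Ext_vanishes_dual.
by apply: (proj1 (C_left dual) C_dual).2 => //; rewrite n_ge2.
Qed.

Lemma n_cluster_tilting_join_out_arrow n (C : rmod F V A -> Prop) (a a' b : A) :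
  (2 <= n)%N -> n_cluster_tilting src tgt n C ->
  a != a' -> tgt a = tgt a' -> src b = src a -> b = a.
Proof.
move=> n_ge2 CT neq_aa' tgt_aa' src_ba; have [//|neq_ba] := eqVneq b a.
case: (Ext1_dual_free_nonvanishing neq_aa' _ tgt_aa' src_ba); first by rewrite eq_sym.
exact: n_cluster_tilting_Ext1_dual_free n_ge2 CT.
Qed.

End QuiverAlgebra.

Lemma outdeg_eq1 (V A : finType) (src : A -> V) (a : A) :
  (forall b, src b = src a -> b = a) -> outdeg src (src a) = 1%N.
Proof.
move=> uniq_a; rewrite /outdeg -(cards1 a); congr #|pred_of_set _|.
by apply/setP => b; rewrite !inE; apply/eqP/eqP => [/uniq_a|->].
Qed.

Lemma indeg_eq1 (V A : finType) (tgt : A -> V) (a : A) :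
  (forall b, tgt b = tgt a -> b = a) -> indeg tgt (tgt a) = 1%N.
Proof. exact: outdeg_eq1. Qed.

Theorem lemma2p4 (F : fieldType) (V A : finType) (src tgt : A -> V)
  (n : nat) (C : rmod F V A -> Prop) :
  quiver_connected src tgt -> (2 <= n)%N ->
  n_cluster_tilting src tgt n C ->
  (forall a1 a2 : A, a1 != a2 -> tgt a1 = tgt a2 ->
     outdeg src (src a1) = 1%N /\ outdeg src (src a2) = 1%N) /\
  (forall a1 a2 : A, a1 != a2 -> src a1 = src a2 ->
     indeg tgt (tgt a1) = 1%N /\ indeg tgt (tgt a2) = 1%N).
Proof.
move=> _ n_ge2 CT.
have join_out := n_cluster_tilting_join_out_arrow n_ge2 CT.
split=> a1 a2 neq12 E.
  split; apply: outdeg_eq1 => b; first exact: join_out neq12 E.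
  by apply: (join_out _ a1); rewrite // eq_sym.
have split_in a b c : b != c -> src b = src c -> tgt a = tgt b -> a = b.
  move=> neq_bc src_bc tgt_ab; have [//|neq_ab] := eqVneq a b.
  by move: neq_bc; rewrite (join_out b a c _ (esym tgt_ab) (esym src_bc)) ?eqxx // eq_sym.
split; apply: indeg_eq1 => b; first exact: split_in neq12 E.
by apply: (split_in _ _ a1); rewrite // eq_sym.
Qed.
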